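(* Let $\sigma$ be a confined position on $K_{a,b}$ with sides $L$ ($|L|=a$) and $R$ ($|R|=b$), and let $t\ge 0$. If $a$ divides $\alpha_t(L)$, then $u_t(\sigma,v)=\alpha_t(L)/a$ for every $v\in L$.
   Context: Parallel chip-firing game: a position $\sigma$ assigns a nonnegative integer to each vertex; writing $\Phi_\sigma(v)$ for the number of neighbors $w$ of $v$ with $\sigma(w)\ge\deg(w)$, the step operator is $U\sigma(v)=\sigma(v)+\Phi_\sigma(v)$ if $\sigma(v)\le \deg(v)-1$ and $U\sigma(v)=\sigma(v)+\Phi_\sigma(v)-\deg(v)$ otherwise. A position is confined if every vertex satisfies $\Phi_\sigma(v)\le\sigma(v)\le\Phi_\sigma(v)+\deg(v)-1$. In $K_{a,b}$ each vertex of $L$ is adjacent exactly to all vertices of $R$. $u_t(\sigma,v)=|\{s: 0\le s<t,\ U^s\sigma(v)\ge\deg(v)\}|$, and $\alpha_t(L)=\sum_{v\in L}u_t(\sigma,v)$. *)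

From mathcomp Require Import all_boot.
Set Implicit Arguments. Unset Strict Implicit. Unset Printing Implicit Defensive.

(* Parallel chip-firing on a simple graph given by an edge relation e on a finType T.
   Positions are functions T -> nat. *)
Section ChipFiring.
Variables (T : finType) (e : rel T).

Definition deg (v : T) : nat := #|[pred w | e v w]|.

Definition Phi (sigma : T -> nat) (v : T) : nat :=
  #|[pred w | e v w && (deg w <= sigma w)]|.

Definition step (sigma : T -> nat) : T -> nat :=
  fun v => if deg v <= sigma v then sigma v + Phi sigma v - deg v
           else sigma v + Phi sigma v.

(* confined: Phi(v) <= sigma(v) <= Phi(v) + deg(v) - 1  (integer inequality,
   written strictly to avoid truncated subtraction) *)
Definition confined (sigma : T -> nat) : Prop :=
  forall v, Phi sigma v <= sigma v /\ sigma v < Phi sigma v + deg v.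

Definition u (t : nat) (sigma : T -> nat) (v : T) : nat :=
  count (fun s => deg v <= iter s step sigma v) (iota 0 t).

End ChipFiring.

(* Complete bipartite graph K_{a,b}: vertices 'I_a + 'I_b, L = inl side, R = inr side. *)
Definition kab (a b : nat) : rel ('I_a + 'I_b)%type :=
  fun x y => match x, y with
             | inl _, inr _ => true
             | inr _, inl _ => true
             | _, _ => false
             end.
Arguments kab a b : clear implicits.

Definition alphaL (a b t : nat) (sigma : ('I_a + 'I_b)%type -> nat) : nat :=
  \sum_(i < a) @u _ (kab a b) t sigma (inl i).
Arguments alphaL a b t sigma : clear implicits.

From mathcomp Require Import all_boot zify.
From Stdlib Require Import Lia.

(* Two vertices of L have the same neighbourhood R, so they have the same
   degree D and receive the same number of chips at every step.  Hence
   x_v + D u_v - sigma v, with x = U^t sigma, is the same for both (it is the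
   total number of chips received), and the bound |x_v - x_w| < D given by
   confinement persists.  Together these force |u_v - u_w| <= 1, and a family
   of naturals that pairwise differ by at most one and whose sum is divisible
   by its size is constant. *)

Lemma ltn_sum {I : finType} (F G : I -> nat) (i : I) :
  (forall j, F j <= G j) -> F i < G i -> \sum_j F j < \sum_j G j.
Proof.
move=> leFG ltFGi; rewrite (bigD1 i) //= [X in _ < X](bigD1 i) //=.
by rewrite -addSn leq_add // leq_sum.
Qed.

Lemma almost_constant_eq_mean {I : finType} (f : I -> nat) :
  (forall i j, f i <= (f j).+1) -> #|I| %| \sum_j f j ->
  forall i, f i = (\sum_j f j) %/ #|I|.
Proof.
move=> near_f dvd_sum i; set q := _ %/ _.
have n_gt0 : 0 < #|I| by apply/card_gt0P; exists i.
have sumE : \sum_j f j = #|I| * q by rewrite mulnC divnK.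
have constE (c : nat) : \sum_(j : I) c = #|I| * c by rewrite sum_nat_const.
have lt_fi : #|I| * f i < #|I| * q.+1.
  have sumS : \sum_j (f j).+1 = #|I| + \sum_j f j.
    by rewrite -sum1_card -big_split; apply: eq_bigr => j _; rewrite /= add1n.
  rewrite mulnS -sumE -sumS -constE.
  exact: (ltn_sum _ _ i (near_f i) (ltnSn _)).
have lt_q : #|I| * q < #|I| * (f i).+1.
  rewrite -sumE -constE.
  exact: (ltn_sum _ _ i (near_f^~ i) (ltnSn _)).
move: lt_fi lt_q; rewrite !ltn_pmul2l // !ltnS => le_fi_q le_q_fi.
by apply/eqP; rewrite eqn_leq le_fi_q le_q_fi.
Qed.

Section TwinVertices.
Variables (T : finType) (e : rel T).
Local Notation deg := (deg e).
Local Notation Phi := (Phi e).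
Local Notation step := (step e).
Local Notation u := (u e).

Lemma step_firing (s : T -> nat) v :
  step s v + deg v * (deg v <= s v) = s v + Phi s v.
Proof.
rewrite /step; case: leqP => [fires|_]; last by rewrite muln0 addn0.
by rewrite muln1 subnK // (leq_trans fires) ?leq_addr.
Qed.

Lemma u_succ t sigma v :
  u t.+1 sigma v = u t sigma v + (deg v <= iter t step sigma v).
Proof. by rewrite /u -addn1 iotaD count_cat /= addn0. Qed.

Lemma iter_step_chips t sigma v :
  iter t step sigma v + deg v * u t sigma v =
  sigma v + \sum_(0 <= s < t) Phi (iter s step sigma) v.
Proof.
elim: t => [|t IH]; first by rewrite /u big_geq // muln0 !addn0.
have := step_firing (iter t step sigma) v.
rewrite u_succ big_nat_recr //= mulnDr; move: (deg v * _) => fired; lia.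
Qed.

Lemma deg_twin {v w} : e v =1 e w -> deg v = deg w.
Proof. by move=> twin; rewrite /deg; apply: eq_card => x; rewrite !inE twin. Qed.

Lemma Phi_twin (s : T -> nat) {v w} : e v =1 e w -> Phi s v = Phi s w.
Proof. by move=> twin; rewrite /Phi; apply: eq_card => x; rewrite !inE twin. Qed.

Lemma twin_chips_balance t sigma {v w} : e v =1 e w ->
  iter t step sigma v + deg v * u t sigma v + sigma w =
  iter t step sigma w + deg v * u t sigma w + sigma v.
Proof.
move=> twin; rewrite !iter_step_chips (deg_twin twin) iter_step_chips.
rewrite (eq_bigr (fun s => Phi (iter s step sigma) w)) => [|s _]; first lia.
exact: Phi_twin.
Qed.

Lemma twin_iter_lt t {sigma v w} : e v =1 e w ->
  sigma v < sigma w + deg v ->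
  iter t step sigma v < iter t step sigma w + deg v.
Proof.
move=> twin; elim: t => [//|t IH] /= /IH lt_vw.
set x := iter t step sigma in lt_vw *.
have fire_v := step_firing x v; have fire_w := step_firing x w.
rewrite -(deg_twin twin) -(Phi_twin x twin) in fire_w.
by case: (leqP (deg v) (x v)); case: (leqP (deg v) (x w)) => /= *; lia.
Qed.

Lemma twin_u_le {t sigma v w} : e v =1 e w ->
  sigma v < sigma w + deg v -> sigma w < sigma v + deg w ->
  u t sigma v <= (u t sigma w).+1.
Proof.
move=> twin lt_vw lt_wv.
have deg_gt0 : 0 < deg v by move: lt_vw lt_wv; rewrite (deg_twin twin); lia.
have balance := twin_chips_balance t sigma twin.
have twin' : e w =1 e v by move=> x; rewrite twin.
have := twin_iter_lt t twin' lt_wv; rewrite (deg_twin twin') => lt_x.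
rewrite -ltnS -(ltn_pmul2l deg_gt0) !mulnS; lia.
Qed.

Lemma confined_twin_lt {sigma v w} : confined e sigma -> e v =1 e w ->
  sigma v < sigma w + deg v.
Proof.
move=> conf twin; have [_ lt_v] := conf v; have [le_w _] := conf w.
by rewrite (Phi_twin sigma twin) in lt_v; apply: leq_trans lt_v _; rewrite leq_add2r.
Qed.

End TwinVertices.

Theorem lemma3p2 (a b : nat) (sigma : ('I_a + 'I_b)%type -> nat) (t : nat) :
  @confined _ (kab a b) sigma ->
  a %| alphaL a b t sigma ->
  forall i : 'I_a, @u _ (kab a b) t sigma (inl i) = alphaL a b t sigma %/ a.
Proof.
move=> conf.
have twinL (j k : 'I_a) : kab a b (inl j) =1 kab a b (inl k) by case.
have near (j k : 'I_a) :
    u (kab a b) t sigma (inl j) <= (u (kab a b) t sigma (inl k)).+1.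
  by apply: twin_u_le (twinL j k) _ _; apply: confined_twin_lt.
have := almost_constant_eq_mean (fun j => u (kab a b) t sigma (inl j)) near.
by rewrite card_ord.
Qed.
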